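(* Let $(H,v)$ be a rooted graph. Then for any integers $k\ge 0$ and $g\ge 2$, \[ X_{P^k(C_g,\,H)}=(g-1)X_{H^{k+g-1}}-\sum_{l=1}^{g-2}X_{C_{g-l}}\,X_{H^{k+l-1}}. \]
   Context: All graphs are finite simple graphs. The chromatic symmetric function of a graph $G$ is $X_G=\sum_{\kappa}\prod_{v\in V(G)}x_{\kappa(v)}$, where $\kappa$ ranges over proper colorings $\kappa:V(G)\to\{1,2,\dots\}$. $C_g$ is the cycle on $g$ vertices for $g\ge 3$, and $C_2:=K_2$; cycles are rooted at any vertex. For rooted graphs $(G,u)$, $(H,v)$ and $k\ge 0$, $P^k(G,H)$ is obtained from the disjoint union of $G$ and $H$ by adding a path of length $k$ (with $k-1$ new internal vertices) joining $u$ and $v$ (for $k=0$, $u$ and $v$ are identified). The tailed graph $H^k$ is $P^k(H,K_1)$, i.e., $H$ with a pendant path of length $k$ attached at its root. *)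

From HB Require Import structures.
From mathcomp Require Import all_boot all_algebra.
From mathcomp Require Import mpoly.
Set Implicit Arguments. Unset Strict Implicit. Unset Printing Implicit Defensive.
Import GRing.Theory.
Local Open Scope ring_scope.

Record rooted_graph := RGraph { rvtx : finType; radj : rel rvtx; rroot : rvtx }.
Arguments radj : clear implicits.
Arguments rroot : clear implicits.

Definition simple_rgraph (G : rooted_graph) :=
  ssrbool.symmetric (radj G) /\ irreflexive (radj G).

(* Chromatic symmetric function, truncated to n variables x_0..x_{n-1}
   (colours in 'I_n).  Two symmetric functions are equal iff all their
   truncations agree, so X_G is represented by the family (chrom n G)_n. *)
Definition chrom (n : nat) (G : rooted_graph) : {mpoly int[n]} :=
  \sum_(f : {ffun rvtx G -> 'I_n} |
          [forall x, forall y, radj G x y ==> (f x != f y)])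
     \prod_(x : rvtx G) 'X_(f x).

Definition K1 : rooted_graph := RGraph (fun (_ _ : unit) => false) tt.

(* Cycle C_g on vertices 0..g-1 (type 'I_(g.-1.+1), which is 'I_g for g >= 1),
   i adjacent to i+1 mod g; for g = 2 this is K_2. Rooted at 0. *)
Definition cycle_adj (g : nat) (i j : 'I_(g.-1.+1)) : bool :=
  (i != j) && ((val j == (val i).+1 %% g)%N || (val i == (val j).+1 %% g)%N).
Definition cycleG (g : nat) : rooted_graph := RGraph (@cycle_adj g) ord0.

(* P^k(G,H): disjoint union of G and H joined by a path of length k from
   root u of G to root v of H.  Vertex set: V(G) + {p_1..p_k} + (V(H) \ v),
   where the path is u = p_0, p_1, ..., p_k and p_k plays the role of v
   (for k = 0, v is identified with u). *)
Section Pk.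
Variables (k : nat) (G H : rooted_graph).

Definition PkV : finType :=
  ((rvtx G + 'I_k) + {w : rvtx H | w != rroot H})%type.

Definition Pk_pos (i : nat) : PkV :=
  match i with
  | 0 => inl (inl (rroot G))
  | j.+1 => oapp (fun o : 'I_k => inl (inr o)) (inl (inl (rroot G))) (insub j)
  end.

Definition Pk_embH (w : rvtx H) : PkV :=
  match insub w : option {w : rvtx H | w != rroot H} with
  | Some w' => inr w'
  | None => Pk_pos k
  end.

Definition Pk_adj (x y : PkV) : bool :=
  [|| [exists a, exists b,
         [&& radj G a b, x == inl (inl a) & y == inl (inl b)]],
      [exists a, exists b,
         [&& radj H a b, x == Pk_embH a & y == Pk_embH b]]
    | [exists i : 'I_k,
         ((x == Pk_pos i) && (y == Pk_pos i.+1))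
         || ((y == Pk_pos i) && (x == Pk_pos i.+1))]].

Definition Pk : rooted_graph := RGraph Pk_adj (inl (inl (rroot G))).
End Pk.

Definition tailG (H : rooted_graph) (k : nat) : rooted_graph := Pk k H K1.

(* The identity holds for weighted colouring sums [sum_f prod_x w (f x)] over
   proper colourings with any colour weights [w] in a commutative ring; the
   truncated chromatic symmetric function is the case [w c = 'X_c].
   A colouring of P^k(C_g, H) is a colouring of C_g, then a proper walk of
   length k of colours starting at the root colour, then a colouring of H whose
   root gets the end colour of the walk.  Reversing the walk, the cycle sits at
   its far end, and colourings of C_g with root coloured b are walks of length
   g-1 from b that end on a colour different from b.  Splitting walks by whether
   they end on b gives, by induction on g, this closed-walk weight as
   (g-1) times the path weight of length g-1 minus the sum of X_{C_{g-l}} times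
   the path weight of length l-1.  Appending the walk of length k turns each
   path weight at the root of H into the colouring sum of a tailed graph. *)

From mathcomp Require Import all_boot all_algebra.
From mathcomp Require Import mpoly.
From mathcomp Require Import ring zify.
Set Implicit Arguments. Unset Strict Implicit. Unset Printing Implicit Defensive.
Import GRing.Theory.
Local Open Scope ring_scope.

Section WeightedColourings.
Variables (C : finType) (R : comPzRingType) (w : C -> R).

(* Colour of vertex [i] on the path whose vertex 0 is coloured [b] and vertex
   [i.+1] is coloured [p i]; indices beyond [k] give the junk value [b]. *)
Definition walk_at k (b : C) (p : {ffun 'I_k -> C}) (i : nat) : C :=
  if i is j.+1 then oapp p b (insub j) else b.
Arguments walk_at : simpl never.

Definition proper_walk k b (p : {ffun 'I_k -> C}) :=
  [forall i : 'I_k, walk_at b p i != walk_at b p i.+1].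

Definition walk_sum k b (F : C -> R) : R :=
  \sum_(p : {ffun 'I_k -> C} | proper_walk b p) (\prod_i w (p i)) * F (walk_at b p k).

Definition ffun_cons k (c : C) (q : {ffun 'I_k -> C}) : {ffun 'I_k.+1 -> C} :=
  [ffun i : 'I_k.+1 => walk_at c q i].

Definition ffun_behead k (p : {ffun 'I_k.+1 -> C}) : {ffun 'I_k -> C} :=
  [ffun i => p (lift ord0 i)].

Lemma walk_at_cons k b c (q : {ffun 'I_k -> C}) i : (i <= k)%N ->
  walk_at b (ffun_cons c q) i.+1 = walk_at c q i.
Proof.
move=> hi; rewrite /walk_at; case: insubP => [o _ <-|/negP] /=.
  by rewrite ffunE.
by rewrite ltnS hi.
Qed.

Lemma ffun_cons0 k c (q : {ffun 'I_k -> C}) : ffun_cons c q ord0 = c.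
Proof. by rewrite ffunE. Qed.

Lemma ffun_cons_lift k c (q : {ffun 'I_k -> C}) i : ffun_cons c q (lift ord0 i) = q i.
Proof. by rewrite ffunE lift0 /walk_at valK. Qed.

Lemma ffun_consK k (p : {ffun 'I_k.+1 -> C}) : ffun_cons (p ord0) (ffun_behead p) = p.
Proof.
apply/ffunP => -[[|j] hj]; rewrite ffunE /walk_at /=.
  by congr (p _); apply: val_inj.
rewrite insubT /= ffunE; congr (p _); exact: val_inj.
Qed.

Lemma ffun_beheadK k c (q : {ffun 'I_k -> C}) : ffun_behead (ffun_cons c q) = q.
Proof. by apply/ffunP => i; rewrite ffunE ffun_cons_lift. Qed.

Lemma sum_ffun_cons k (P : pred {ffun 'I_k.+1 -> C}) (F : {ffun 'I_k.+1 -> C} -> R) :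
  \sum_(p | P p) F p = \sum_c \sum_(q | P (ffun_cons c q)) F (ffun_cons c q).
Proof.
rewrite pair_big_dep (reindex (fun cq : C * {ffun 'I_k -> C} => ffun_cons cq.1 cq.2)) //=.
exists (fun p : {ffun 'I_k.+1 -> C} => (p ord0, ffun_behead p)) => [[c q]|p] _ /=.
  by rewrite ffun_cons0 ffun_beheadK.
by rewrite ffun_consK.
Qed.

Lemma proper_walk_cons k b c (q : {ffun 'I_k -> C}) :
  proper_walk b (ffun_cons c q) = (b != c) && proper_walk c q.
Proof.
apply/forallP/andP => [h|[bc /forallP h] [[|j] hj]].
- split; first by have := h ord0; rewrite walk_at_cons.
  apply/forallP => i; have := h (lift ord0 i); rewrite lift0.
  by rewrite !walk_at_cons // ltnW.
- by rewrite walk_at_cons.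
- by rewrite !walk_at_cons // 1?ltnW //; exact: (h (Ordinal (hj : (j < k)%N))).
Qed.

Lemma walk_sum0 b F : walk_sum 0 b F = F b.
Proof.
rewrite /walk_sum (big_pred1 [ffun => b]) ?big_ord0 ?mul1r // => p.
by apply/forallP/eqP => _; [apply/ffunP|]; case.
Qed.

Lemma walk_sumS k b F :
  walk_sum k.+1 b F = \sum_(c | c != b) w c * walk_sum k c F.
Proof.
rewrite /walk_sum sum_ffun_cons [RHS]big_mkcond; apply: eq_bigr => c _.
rewrite eq_sym; case: eqP => [<-|bc] /=.
  by rewrite big_pred0 // => q; rewrite proper_walk_cons eqxx.
rewrite mulr_sumr; apply: eq_big => [q|q _]; first by rewrite proper_walk_cons; case: eqP.
rewrite big_ord_recl ffun_cons0 walk_at_cons // -mulrA; congr (_ * (_ * _)).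
by apply: eq_bigr => i _; rewrite ffun_cons_lift.
Qed.

Lemma eq_walk_sum k b F G : F =1 G -> walk_sum k b F = walk_sum k b G.
Proof. by move=> eFG; apply: eq_bigr => p _; rewrite eFG. Qed.

Lemma walk_sumB k b F G :
  walk_sum k b (fun a => F a - G a) = walk_sum k b F - walk_sum k b G.
Proof. by rewrite -sumrB; apply: eq_bigr => p _; rewrite mulrBr. Qed.

Lemma walk_sumZ k b s F : walk_sum k b (fun a => s * F a) = s * walk_sum k b F.
Proof. by rewrite mulr_sumr; apply: eq_bigr => p _; rewrite mulrCA. Qed.

Lemma walk_sum_sum k b m (G : nat -> C -> R) :
  walk_sum k b (fun a => \sum_(0 <= i < m) G i a) =
  \sum_(0 <= i < m) walk_sum k b (G i).
Proof. by rewrite exchange_big; apply: eq_bigr => p _; rewrite mulr_sumr. Qed.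

Lemma walk_sumD k j b F : walk_sum (k + j) b F = walk_sum k b (fun a => walk_sum j a F).
Proof.
elim: k b => [|k IH] b; first by rewrite walk_sum0.
by rewrite addSn !walk_sumS; apply: eq_bigr => c _; rewrite IH.
Qed.

Lemma walk_sumSr k b F :
  walk_sum k.+1 b F = walk_sum k b (fun c => \sum_(a | a != c) w a * F a).
Proof.
rewrite -addn1 walk_sumD; apply: eq_walk_sum => c.
by rewrite walk_sumS; apply: eq_bigr => a _; rewrite walk_sum0.
Qed.

Definition walk_weight k b a := walk_sum k b (fun d => (d == a)%:R).

Lemma walk_sumE k b F : walk_sum k b F = \sum_a walk_weight k b a * F a.
Proof.
under [RHS]eq_bigr do rewrite mulr_suml.
rewrite exchange_big; apply: eq_bigr => p _ /=.
rewrite (bigD1 (walk_at b p k)) //= eqxx mulr1 [X in _ + X]big1 ?addr0 // => a ne.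
by rewrite eq_sym (negbTE ne) mulr0 mul0r.
Qed.

Lemma sum_neq_mul_eq c b :
  \sum_(d | d != c) w d * (d == b)%:R = (b != c)%:R * w b.
Proof.
rewrite big_mkcond (bigD1 b) //= eqxx big1 ?addr0 => [|d /negbTE->].
  by case: (b != c); rewrite ?mulr1 ?mul1r ?mul0r.
by case: (d != c); rewrite ?mulr0.
Qed.

(* Reversing a walk from [b] to [a] gives one from [a] to [b]. *)
Lemma walk_weight_sym k a b : w b * walk_weight k b a = w a * walk_weight k a b.
Proof.
elim: k a b => [|k IH] a b.
  by rewrite /walk_weight !walk_sum0 eq_sym; case: eqP => [->|]; rewrite ?mulr0.
rewrite /walk_weight walk_sumS walk_sumSr walk_sumE big_mkcond !mulr_sumr.
apply: eq_bigr => c _; rewrite sum_neq_mul_eq (eq_sym c b).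
case: (b != c); last by rewrite !mul0r !mulr0.
by rewrite mul1r (IH a c); ring.
Qed.

Lemma walk_sum_swap k (F G : C -> R) :
  \sum_c w c * walk_sum k c F * G c = \sum_a w a * F a * walk_sum k a G.
Proof.
under eq_bigr do rewrite walk_sumE mulr_sumr mulr_suml.
under [RHS]eq_bigr do rewrite walk_sumE mulr_sumr.
rewrite exchange_big; apply: eq_bigr => a _; apply: eq_bigr => c _ /=.
by rewrite mulrA walk_weight_sym; ring.
Qed.

Definition path_weight j b := walk_sum j b (fun _ => 1).
Definition closed_weight j b := walk_sum j b (fun a => (a != b)%:R).
Definition path_poly j := \sum_c w c * path_weight j c.
Definition cycle_poly j := \sum_c w c * closed_weight j.-1 c.

Lemma path_weight0 b : path_weight 0 b = 1.
Proof. exact: walk_sum0. Qed.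

Lemma path_weightS j b : path_weight j.+1 b = path_poly j - w b * path_weight j b.
Proof. by rewrite /path_poly /path_weight walk_sumS [in RHS](bigD1 b) //=; ring. Qed.

Lemma closed_weight0 b : closed_weight 0 b = 0.
Proof. by rewrite /closed_weight walk_sum0 eqxx. Qed.

Lemma closed_weightS j b :
  closed_weight j.+1 b = path_weight j.+1 b - w b * closed_weight j b.
Proof.
rewrite /closed_weight /path_weight !walk_sumSr -walk_sumZ -walk_sumB.
apply: eq_walk_sum => c; rewrite mulrC (eq_sym c b) -sum_neq_mul_eq -sumrB.
by apply: eq_bigr => a _; case: eqP; rewrite ?mulr0 ?mulr1 ?subr0 ?subrr.
Qed.

Lemma sum_mul_lincomb (u f g : C -> R) (h : nat -> C -> R) (s : nat -> R) x m :
  (forall c, f c = x * g c - \sum_(0 <= i < m) s i * h i c) ->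
  \sum_c u c * f c = x * \sum_c u c * g c - \sum_(0 <= i < m) s i * \sum_c u c * h i c.
Proof.
move=> ef; under eq_bigr do rewrite ef mulrBr mulrCA mulr_sumr.
rewrite sumrB mulr_sumr exchange_big /=; congr (_ - _).
by apply: eq_bigr => i _; rewrite mulr_sumr; apply: eq_bigr => c _; rewrite mulrCA.
Qed.

(* The case k = 0, H = K_1 of the theorem, rooted at the colour [b] of the
   root of C_(m+2). *)
Lemma closed_weightE m b :
  closed_weight m.+1 b =
  m.+1%:R * path_weight m.+1 b - \sum_(0 <= i < m) cycle_poly (m.+1 - i) * path_weight i b.
Proof.
elim: m b => [|m IH] b.
  by rewrite closed_weightS closed_weight0 mulr0 subr0 big_geq //; ring.
have cycle_polyE : cycle_poly m.+2 =
    m.+1%:R * path_poly m.+1 - \sum_(0 <= i < m) cycle_poly (m.+1 - i) * path_poly i.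
  exact: sum_mul_lincomb.
have wb_path : w b * path_weight m.+1 b = path_poly m.+1 - path_weight m.+2 b.
  by rewrite (path_weightS m.+1) opprB addrC subrK.
have wb_sum : w b * \sum_(0 <= i < m) cycle_poly (m.+1 - i) * path_weight i b =
    \sum_(0 <= i < m) cycle_poly (m.+1 - i) * path_poly i
    - \sum_(0 <= i < m) cycle_poly (m.+2 - i.+1) * path_weight i.+1 b.
  by rewrite mulr_sumr -sumrB; apply: eq_bigr => i _; rewrite path_weightS subSS; ring.
rewrite closed_weightS IH mulrBr wb_sum (mulrCA (w b)) wb_path.
rewrite big_nat_recl // path_weight0 subn0 cycle_polyE; ring.
Qed.

Definition proper_col (G : rooted_graph) (f : {ffun rvtx G -> C}) :=
  [forall x, forall y, radj G x y ==> (f x != f y)].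
Arguments proper_col : clear implicits.

Definition colsum G := \sum_(f | proper_col G f) \prod_x w (f x).

Local Notation nonroot H := {x : rvtx H | x != rroot H}.

Definition root_ext H a (f : {ffun nonroot H -> C}) : {ffun rvtx H -> C} :=
  [ffun x => if insub x is Some s then f s else a].

Definition pinned_colsum H a :=
  \sum_(f : {ffun nonroot H -> C} | proper_col H (root_ext a f)) \prod_s w (f s).

Lemma root_ext_root H a f : @root_ext H a f (rroot H) = a.
Proof. by rewrite ffunE insubF // eqxx. Qed.

Lemma root_ext_val H a f s : @root_ext H a f (val s) = f s.
Proof. by rewrite ffunE valK. Qed.

Section PathJoin.
Variables (k : nat) (G H : rooted_graph).

Definition Pk_join (fG : {ffun rvtx G -> C}) (p : {ffun 'I_k -> C})
    (fH : {ffun nonroot H -> C}) : {ffun PkV k G H -> C} :=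
  [ffun x => match x with
             | inl (inl a) => fG a
             | inl (inr i) => p i
             | inr s => fH s end].

Section JoinedColouring.
Variables (fG : {ffun rvtx G -> C}) (p : {ffun 'I_k -> C}) (fH : {ffun nonroot H -> C}).
Local Notation f := (Pk_join fG p fH).
Local Notation u := (fG (rroot G)).

Lemma Pk_join_pos i : f (Pk_pos k G H i) = walk_at u p i.
Proof. by rewrite /walk_at; case: i => [|j] /=; rewrite ?ffunE //; case: insub. Qed.

Lemma Pk_join_embH x : f (Pk_embH k G x) = root_ext (walk_at u p k) fH x.
Proof.
rewrite /Pk_embH [RHS]ffunE; case: insub => [s|]; last exact: Pk_join_pos.
by rewrite ffunE.
Qed.

Lemma proper_Pk_join : proper_col (Pk k G H) f =
  [&& proper_col G fG, proper_walk u p & proper_col H (root_ext (walk_at u p k) fH)].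
Proof.
apply/idP/and3P => [/forallP fP|[/forallP fGP /forallP pP /forallP fHP]].
  have {}fP x y : Pk_adj x y -> f x != f y by move/forallP/(_ y)/implyP: (fP x).
  split; apply/forallP.
  - move=> a; apply/forallP => b; apply/implyP => ab.
    have := fP (inl (inl a)) (inl (inl b)); rewrite !ffunE; apply.
    apply/or3P; constructor 1.
    by apply/existsP; exists a; apply/existsP; exists b; rewrite ab !eqxx.
  - move=> i; have := fP (Pk_pos k G H i) (Pk_pos k G H i.+1); rewrite !Pk_join_pos; apply.
    by apply/or3P; constructor 3; apply/existsP; exists i; rewrite !eqxx.
  - move=> a; apply/forallP => b; apply/implyP => ab.
    have := fP (Pk_embH k G a) (Pk_embH k G b); rewrite !Pk_join_embH; apply.
    apply/or3P; constructor 2.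
    by apply/existsP; exists a; apply/existsP; exists b; rewrite ab !eqxx.
apply/forallP => x; apply/forallP => y; apply/implyP; case/or3P.
- case/existsP => a /existsP [b /and3P [ab /eqP-> /eqP->]].
  by rewrite !ffunE; move/forallP/(_ b)/implyP: (fGP a); apply.
- case/existsP => a /existsP [b /and3P [ab /eqP-> /eqP->]].
  by rewrite !Pk_join_embH; move/forallP/(_ b)/implyP: (fHP a); apply.
- case/existsP => i /orP [] /andP [/eqP-> /eqP->]; rewrite !Pk_join_pos //.
  by rewrite eq_sym.
Qed.

End JoinedColouring.

Lemma colsum_Pk : colsum (Pk k G H) =
  \sum_(fG | proper_col G fG) (\prod_x w (fG x)) * walk_sum k (fG (rroot G)) (pinned_colsum H).
Proof.
under eq_bigr do rewrite mulr_sumr /walk_sum; rewrite pair_big_dep.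
under eq_bigr do rewrite /pinned_colsum !mulr_sumr; rewrite pair_big_dep.
rewrite /colsum [LHS](reindex (fun t => Pk_join t.1.1 t.1.2 t.2)) /=; last first.
  exists (fun f : {ffun PkV k G H -> C} =>
     (([ffun a => f (inl (inl a))], [ffun i => f (inl (inr i))]), [ffun s => f (inr s)])).
    by move=> [[fG' p'] fH'] _; congr (_, _); [congr (_, _)|]; apply/ffunP => ?; rewrite !ffunE.
  by move=> f _; apply/ffunP => -[[a|i]|s]; rewrite !ffunE.
apply: eq_big => [[[fG' p'] fH']|[[fG' p'] fH'] _] /=; first by rewrite proper_Pk_join andbA.
rewrite !big_sumType mulrA; congr (_ * _ * _); apply: eq_bigr => ? _; by rewrite ffunE.
Qed.

End PathJoin.

Lemma colsum_by_root H (Phi : C -> R) :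
  \sum_(f | proper_col H f) (\prod_x w (f x)) * Phi (f (rroot H)) =
  \sum_a w a * pinned_colsum H a * Phi a.
Proof.
under [RHS]eq_bigr do rewrite mulr_sumr mulr_suml; rewrite pair_big_dep.
rewrite [LHS](reindex (fun af : C * {ffun nonroot H -> C} => root_ext af.1 af.2)) /=.
  apply: eq_bigr => -[a f] _ /=; rewrite root_ext_root (bigD1 (rroot H)) //= root_ext_root.
  rewrite (reindex_omap (val : nonroot H -> rvtx H) insub) => [|x hx]; last first.
    by case: insubP => [s _ <-|] //; rewrite hx.
  congr (_ * _ * _); apply: eq_big => [s|s _]; first by rewrite (valP s) valK eqxx.
  by rewrite root_ext_val.
exists (fun f : {ffun rvtx H -> C} => (f (rroot H), [ffun s => f (val s)])).
  move=> [a f] _ /=; rewrite root_ext_root; congr (_, _).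
  by apply/ffunP => s; rewrite ffunE root_ext_val.
move=> f _; apply/ffunP => x; rewrite ffunE.
by case: insubP => [s _ <-|/negPn/eqP ->]; rewrite ?ffunE.
Qed.

Lemma pinned_colsum_K1 a : pinned_colsum K1 a = 1.
Proof.
have nonroot0 (s : nonroot K1) : False by case: s => -[]; rewrite eqxx.
rewrite /pinned_colsum (big_pred1 [ffun => a]) => [|f]; first by rewrite big1.
rewrite /= [f == _](_ : _ = true); first by apply/forallP => x; apply/forallP.
by apply/eqP/ffunP.
Qed.

Lemma colsum_tail H m :
  colsum (tailG H m) = \sum_a w a * pinned_colsum H a * path_weight m a.
Proof.
rewrite colsum_Pk -colsum_by_root; apply: eq_bigr => f _.
by congr (_ * _); apply: eq_walk_sum => a; rewrite pinned_colsum_K1.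
Qed.

Lemma proper_cycle_cons m c (q : {ffun 'I_m.+1 -> C}) :
  proper_col (cycleG m.+2) (ffun_cons c q) = proper_walk c q && (walk_at c q m.+1 != c).
Proof.
have adj_ne (x y : 'I_m.+2) : proper_walk c q -> walk_at c q m.+1 != c ->
    (y : nat) = (x.+1 %% m.+2)%N -> walk_at c q x != walk_at c q y.
  move=> /forallP qP qc; case: (ltnP x.+1 m.+2) => [x_lt|x_ge].
    by rewrite modn_small // => ->; exact: (qP (Ordinal (x_lt : (x < m.+1)%N))).
  have -> : (x : nat) = m.+1 by have := ltn_ord x; lia.
  by rewrite modnn => ->.
apply/forallP/andP => [cP|[qP qc] x].
  split; last first.
    move/forallP/(_ ord0)/implyP: (cP ord_max); rewrite !ffunE; apply.
    by rewrite /= /cycle_adj /= modnn.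
  apply/forallP => i; have i_lt : (i.+1 < m.+2)%N := ltn_ord i.
  move/forallP/(_ (Ordinal i_lt))/implyP: (cP (widen_ord (leqnSn _) i)); rewrite !ffunE; apply.
  by rewrite /= /cycle_adj /= -val_eqE /= modn_small // eqxx andbT ltn_eqF.
apply/forallP => y; apply/implyP => /andP [_ /orP [] /eqP xy]; rewrite !ffunE.
  exact: adj_ne.
by rewrite eq_sym; exact: adj_ne.
Qed.

Lemma cycle_colsum_by_root m (Phi : C -> R) :
  \sum_(f | proper_col (cycleG m.+2) f) (\prod_x w (f x)) * Phi (f (rroot (cycleG m.+2))) =
  \sum_c w c * Phi c * closed_weight m.+1 c.
Proof.
rewrite sum_ffun_cons; apply: eq_bigr => c _.
rewrite (eq_bigl _ _ (@proper_cycle_cons m c)) big_mkcondr mulr_sumr.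
apply: eq_bigr => q _; rewrite big_ord_recl ffun_cons0.
have -> : \prod_(i < m.+1) w (ffun_cons c q (lift ord0 i)) = \prod_i w (q i).
  by apply: eq_bigr => i _; rewrite ffun_cons_lift.
by case: ifP; rewrite ?mulr0 // mulr1 mulrAC.
Qed.

Lemma colsum_cycle j : (2 <= j)%N -> colsum (cycleG j) = cycle_poly j.
Proof.
case: j => [|[|m]] // _; have := cycle_colsum_by_root m (fun _ => 1).
by under eq_bigr do rewrite mulr1; under [in RHS]eq_bigr do rewrite mulr1.
Qed.

Lemma walk_sum_closed_weight k m a : walk_sum k a (closed_weight m.+1) =
  m.+1%:R * path_weight (k + m.+1) a
  - \sum_(0 <= i < m) cycle_poly (m.+1 - i) * path_weight (k + i) a.
Proof.
rewrite (eq_walk_sum _ _ (closed_weightE m)) walk_sumB walk_sumZ walk_sum_sum.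
rewrite /path_weight walk_sumD; congr (_ - _).
by apply: eq_bigr => i _; rewrite walk_sumZ walk_sumD.
Qed.

Theorem colsum_Pk_cycle H k m :
  colsum (Pk k (cycleG m.+2) H) =
  m.+1%:R * colsum (tailG H (k + m.+1))
  - \sum_(0 <= i < m) colsum (cycleG (m.+1 - i)) * colsum (tailG H (k + i)).
Proof.
rewrite colsum_Pk (cycle_colsum_by_root m (fun c => walk_sum k c (pinned_colsum H))).
rewrite walk_sum_swap colsum_tail.
rewrite (sum_mul_lincomb _ (walk_sum_closed_weight k m)); congr (_ - _).
by apply: eq_big_nat => i /andP [_ ltim]; rewrite colsum_cycle ?colsum_tail //; lia.
Qed.

End WeightedColourings.

Unset Implicit Arguments.

Theorem proposition3p2 (H : rooted_graph) (hH : simple_rgraph H) (k g : nat)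
    (hg : (2 <= g)%N) (n : nat) :
  chrom n (Pk k (cycleG g) H) =
    (g - 1)%:R * chrom n (tailG H (k + g - 1))
    - \sum_(1 <= l < g - 1) chrom n (cycleG (g - l)) * chrom n (tailG H (k + l - 1)).
Proof.
case: g hg => [|[|m]] // _.
apply: etrans (colsum_Pk_cycle (fun c : 'I_n => 'X_c) H k m) _.
rewrite big_add1 !subn1 !addnS /=.
by congr (_ - _); apply: eq_bigr => i _; rewrite subSS addnS subn1.
Qed.
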